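(* For any finite alphabet $\mathfrak{G}$ and any $\mathfrak{G}$-trees $\mathfrak{s}$ and $\mathfrak{t}$ such that $\mathfrak{s}\preceq\mathfrak{t}$, in the $\mathfrak{G}$-prefix poset, $\#[\mathfrak{s},\mathfrak{t}] = \mathrm{ld}(\mathrm{sh}(\lozenge_{|\mathfrak{s}|}[\mathfrak{t}\setminus\mathfrak{s}]))$.
   Context: $\mathfrak{G}$ is a finite alphabet (letters with arities $\geq 1$). A $\mathfrak{G}$-tree is either the leaf (the tree with no internal node) or a root decorated by a letter $\mathtt{a}\in\mathfrak{G}$ with $|\mathtt{a}|$ children that are $\mathfrak{G}$-trees; $|\mathfrak{s}|$ is the number of leaves. The $\mathfrak{G}$-prefix poset is the set of $\mathfrak{G}$-trees ordered by $\mathfrak{s}\preceq\mathfrak{t}$ iff $\mathfrak{t}$ is obtained by grafting $\mathfrak{G}$-trees $\mathfrak{r}_1,\dots,\mathfrak{r}_{|\mathfrak{s}|}$ onto the leaves of $\mathfrak{s}$ (left to right); then $\mathfrak{t}\setminus\mathfrak{s} := (\mathfrak{r}_1,\dots,\mathfrak{r}_{|\mathfrak{s}|})$. $\lozenge_k[\mathfrak{r}_1,\dots,\mathfrak{r}_k]$ is the tree with root decorated by a new letter $\lozenge_k$ of arity $k$ and children $\mathfrak{r}_1,\dots,\mathfrak{r}_k$. A shadow is a finite (possibly empty) multiset of shadows. For a tree $\mathfrak{t}$ different from the leaf with root of arity $k$, $\mathrm{sh}(\mathfrak{t})$ is the multiset of the $\mathrm{sh}(\mathfrak{t}(i))$ over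 those $i\in[k]$ such that the $i$-th subtree $\mathfrak{t}(i)$ is not the leaf. The load of a shadow is defined recursively by $\mathrm{ld}(\{s_1,\dots,s_k\}) = \prod_{i\in[k]}(1+\mathrm{ld}(s_i))$ (so the empty shadow has load $1$). *)

From mathcomp Require Import all_boot.
Set Implicit Arguments. Unset Strict Implicit. Unset Printing Implicit Defensive.

Inductive tree (L : Type) : Type :=
| Leaf : tree L
| Node : L -> seq (tree L) -> tree L.
Arguments Leaf {L}.

Section Trees.
Variable L : Type.

Fixpoint wf (ar : L -> nat) (t : tree L) : bool :=
  match t with
  | Leaf => true
  | Node a ts => (size ts == ar a) &&
      (fix wfl (us : seq (tree L)) : bool :=
         match us with [::] => true | u :: us' => wf ar u && wfl us' end) ts
  end.

Fixpoint nleaves (t : tree L) : nat :=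
  match t with
  | Leaf => 1
  | Node _ ts =>
      (fix nl (us : seq (tree L)) : nat :=
         match us with [::] => 0 | u :: us' => nleaves u + nl us' end) ts
  end.

Fixpoint graft (t : tree L) (rs : seq (tree L)) : tree L :=
  match t with
  | Leaf => head Leaf rs
  | Node a ts => Node a
      ((fix gl (us : seq (tree L)) (rs : seq (tree L)) : seq (tree L) :=
          match us with
          | [::] => [::]
          | u :: us' => graft u (take (nleaves u) rs) :: gl us' (drop (nleaves u) rs)
          end) ts rs)
  end.

Definition is_leaf (t : tree L) : bool := if t is Leaf then true else false.

End Trees.

Definition prefix_le (L : Type) (ar : L -> nat) (s t : tree L) : Prop :=
  exists rs : seq (tree L),
    [/\ size rs = nleaves s, all (wf ar) rs & t = graft s rs].

(* the family rs witnesses s ⪯ t and is t \ s *)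
Definition is_diff (L : Type) (ar : L -> nat) (s t : tree L) (rs : seq (tree L)) : Prop :=
  [/\ size rs = nleaves s, all (wf ar) rs & t = graft s rs].

Definition card_is (L : Type) (A : tree L -> Prop) (n : nat) : Prop :=
  exists f : 'I_n -> tree L,
    injective f /\ (forall u, A u <-> exists i, f i = u).

Definition interval (L : Type) (ar : L -> nat) (s t : tree L) : tree L -> Prop :=
  fun u => wf ar u /\ prefix_le ar s u /\ prefix_le ar u t.

Fixpoint tmap (L L' : Type) (f : L -> L') (t : tree L) : tree L' :=
  match t with
  | Leaf => Leaf
  | Node a ts => Node (f a)
      ((fix ml (us : seq (tree L)) : seq (tree L') :=
          match us with [::] => [::] | u :: us' => tmap f u :: ml us' end) ts)
  end.

(* ◊_k[r_1,...,r_k]: root decorated by a new letter (None) of arity k;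
   the letters of G are embedded as Some a *)
Definition diamond (L : Type) (rs : seq (tree L)) : tree (option L) :=
  Node None (map (tmap Some) rs).

(* Shadows: finite multisets of shadows, represented by lists
   (all functions used on them are invariant under permutation) *)
Inductive shadow : Type := Sh : seq shadow -> shadow.

Fixpoint ld (s : shadow) : nat :=
  match s with
  | Sh ss => (fix pl (us : seq shadow) : nat :=
                match us with [::] => 1 | u :: us' => (1 + ld u) * pl us' end) ss
  end.

(* shadow of a tree (for the leaf, which is never used, we return the empty shadow) *)
Fixpoint sh (L : Type) (t : tree L) : shadow :=
  match t with
  | Leaf => Sh [::]
  | Node _ ts => Sh
      ((fix sl (us : seq (tree L)) : seq shadow :=
          match us with
          | [::] => [::]
          | u :: us' => if is_leaf u then sl us' else sh u :: sl us'
          end) ts)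
  end.

From HB Require Import structures.
From mathcomp Require Import all_boot.
Set Implicit Arguments. Unset Strict Implicit. Unset Printing Implicit Defensive.

(* The prefixes of a tree [t] are the leaf and, when [t = a[t_1, ..., t_k]], the trees
   [a[u_1, ..., u_k]] with each [u_i] a prefix of [t_i].  Enumerating them as a cartesian
   product gives [1 + prod_i #prefixes(t_i)] of them, that is [1 + ld (sh t)] when [t] is
   not the leaf, since leaf children contribute a factor [1].  Grafting onto [s] is
   injective, and [graft s qs] is a prefix of [graft s rs] iff each [q_i] is a prefix of
   [r_i]; so [[s, t]] is in bijection with the product of the prefix sets of the trees of
   [t \ s], which has [ld (sh (diamond (t \ s)))] elements. *)

Fixpoint allProp (L : Type) (P : tree L -> Prop) (ts : seq (tree L)) : Prop :=
  if ts is u :: us then P u /\ allProp P us else True.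

Definition tree_ind_all (L : Type) (P : tree L -> Prop) (P_Leaf : P Leaf)
    (P_Node : forall a ts, allProp P ts -> P (Node a ts)) : forall t, P t :=
  fix F t := match t with
  | Leaf => P_Leaf
  | Node a ts => P_Node a ts
      ((fix Fs ts : allProp P ts := match ts with
        | [::] => I
        | u :: us => conj (F u) (Fs us)
        end) ts)
  end.

Section TreeEquations.
Variable L : Type.
Implicit Types (a : L) (ts rs : seq (tree L)).

Fixpoint graftl (us rs : seq (tree L)) : seq (tree L) :=
  if us is u :: us' then
    graft u (take (nleaves u) rs) :: graftl us' (drop (nleaves u) rs)
  else [::].

Lemma graftE a ts rs : graft (Node a ts) rs = Node a (graftl ts rs).
Proof. by []. Qed.

Lemma nleavesE a ts : nleaves (Node a ts) = sumn (map (@nleaves L) ts).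
Proof. by elim: ts => //= u us <-. Qed.

Lemma wfE ar a ts : wf ar (Node a ts) = (size ts == ar a) && all (wf ar) ts.
Proof. by rewrite /=; congr (_ && _); elim: ts => //= u us ->. Qed.

Lemma shE a ts : sh (Node a ts) = Sh [seq sh u | u <- ts & ~~ is_leaf u].
Proof. by rewrite /=; congr Sh; elim: ts => //= -[|b vs] us ->. Qed.

Lemma ldE ss : ld (Sh ss) = \prod_(u <- ss) (ld u).+1.
Proof. by elim: ss => [|u us /= ->]; rewrite ?big_nil ?big_cons. Qed.

Lemma ld_sh_Node a ts :
  ld (sh (Node a ts)) = \prod_(u <- ts | ~~ is_leaf u) (ld (sh u)).+1.
Proof. by rewrite shE ldE big_map big_filter. Qed.

End TreeEquations.

Lemma tmapE (L L' : Type) (f : L -> L') a ts :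
  tmap f (Node a ts) = Node (f a) (map (tmap f) ts).
Proof. by rewrite /=; congr Node; elim: ts => //= u us ->. Qed.

Lemma is_leaf_tmap (L L' : Type) (f : L -> L') t : is_leaf (tmap f t) = is_leaf t.
Proof. by case: t. Qed.

Lemma sh_tmap (L L' : Type) (f : L -> L') t : sh (tmap f t) = sh t.
Proof.
elim/tree_ind_all: t => // a ts IH; rewrite tmapE !shE; congr Sh.
elim: ts IH => //= u us IHus [shu /IHus]; rewrite is_leaf_tmap.
by case: (is_leaf u) => //= ->; rewrite shu.
Qed.

Section TreeEqType.
Variable T : eqType.

Fixpoint tree_to_gen (t : tree T) : GenTree.tree T :=
  if t is Node a ts then GenTree.Node 1 (GenTree.Leaf a :: map tree_to_gen ts)
  else GenTree.Node 0 [::].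

Fixpoint gen_to_tree (g : GenTree.tree T) : tree T :=
  if g is GenTree.Node 1 (GenTree.Leaf a :: gs) then Node a (map gen_to_tree gs)
  else Leaf.

Lemma tree_to_genK : cancel tree_to_gen gen_to_tree.
Proof.
elim/tree_ind_all => //= a ts; rewrite -/(map gen_to_tree _) -map_comp => IH.
by congr Node; elim: ts IH => //= u us IHus [-> /IHus ->].
Qed.

End TreeEqType.

HB.instance Definition _ (T : eqType) :=
  Equality.copy (tree T) (can_type (@tree_to_genK T)).

Fixpoint prodseq (X : Type) (xss : seq (seq X)) : seq (seq X) :=
  if xss is xs :: xss' then [seq x :: ys | x <- xs, ys <- prodseq xss'] else [:: [::]].

Lemma size_prodseq (X : Type) (xss : seq (seq X)) :
  size (prodseq xss) = \prod_(xs <- xss) size xs.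
Proof. by elim: xss => [|xs xss IH]; rewrite ?big_nil ?big_cons //= size_allpairs IH. Qed.

Section ProdseqEq.
Variable X : eqType.
Implicit Types (xss : seq (seq X)) (ys : seq X).

Lemma mem_prodseq xss ys : (ys \in prodseq xss) = all2 (fun y xs => y \in xs) ys xss.
Proof.
elim: xss ys => [|xs xss IH] [|y ys] //=.
- by apply/allpairsP => -[[? ?] []].
- apply/allpairsP/andP => [[[a b] /= [ha hb [-> ->]]]|[hy hys]].
    by rewrite -IH.
  by exists (y, ys); rewrite /= IH.
Qed.

Lemma uniq_prodseq xss : all uniq xss -> uniq (prodseq xss).
Proof.
elim: xss => //= xs xss IH /andP[uxs /IH uxss].
by apply: allpairs_uniq => // -[a b] [c d] _ _ [-> ->].
Qed.

End ProdseqEq.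

Lemma size_all2 (A B : Type) (r : A -> B -> bool) s t : all2 r s t -> size s = size t.
Proof. by elim: s t => [|a s IH] [|b t] //= /andP[_ /IH ->]. Qed.

Lemma all2_cat (A B : Type) (r : A -> B -> bool) s1 s2 t1 t2 :
  size s1 = size t1 -> all2 r (s1 ++ s2) (t1 ++ t2) = all2 r s1 t1 && all2 r s2 t2.
Proof. by elim: s1 t1 => [|a s1 IH] [|b t1] //= [/IH ->]; rewrite andbA. Qed.

Lemma all2_mapr (A B C : Type) (r : A -> C -> bool) (f : B -> C) s t :
  all2 r s (map f t) = all2 (fun a b => r a (f b)) s t.
Proof. by elim: s t => [|a s IH] [|b t] //=; rewrite IH. Qed.

Lemma size_take_drop (X : Type) (xs : seq X) m n :
  size xs = m + n -> size (take m xs) = m /\ size (drop m xs) = n.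
Proof. by move=> sz; rewrite size_drop size_takel sz ?leq_addr ?addKn. Qed.

Section Prefixes.
Variable T : eqType.
Implicit Types (a b : T) (s t u : tree T) (ts us qs rs : seq (tree T)).

Fixpoint prefixes t : seq (tree T) :=
  Leaf :: (if t is Node a ts then map (Node a) (prodseq (map prefixes ts)) else [::]).

Lemma mem_prefixes_Node a b ts us :
  (Node b us \in prefixes (Node a ts)) =
  (b == a) && all2 (fun u t => u \in prefixes t) us ts.
Proof.
rewrite /= in_cons /=; apply/mapP/andP => [[vs] | [/eqP-> hus]].
  by rewrite mem_prodseq all2_mapr => hvs [-> ->].
by exists us; rewrite // mem_prodseq all2_mapr.
Qed.

Lemma uniq_prefixes t : uniq (prefixes t).
Proof.
elim/tree_ind_all: t => //= a ts IH.
rewrite map_inj_uniq; last by move=> ? ? [].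
apply/andP; split; first by apply/mapP => -[].
apply: uniq_prodseq; rewrite all_map.
by elim: ts IH => //= u us IHus [-> /IHus].
Qed.

Lemma size_prefixes t :
  size (prefixes t) = if is_leaf t then 1 else (ld (sh t)).+1.
Proof.
elim/tree_ind_all: t => // a ts IH.
rewrite ld_sh_Node /= size_map size_prodseq big_map; congr _.+1; rewrite [RHS]big_mkcond.
elim: ts IH => [|u us IHus] IH; first by rewrite !big_nil.
by rewrite !big_cons; case: IH => -> /IHus ->; case: ifP.
Qed.

Lemma graft_inj s qs qs' : size qs = nleaves s -> size qs' = nleaves s ->
  graft s qs = graft s qs' -> qs = qs'.
Proof.
elim/tree_ind_all: s qs qs' => [|a ss IH] qs qs'.
  by case: qs qs' => [|q [|? ?]] // [|q' [|? ?]] //= _ _ ->.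
rewrite nleavesE !graftE => + + [].
elim: ss IH qs qs' => [|s ss IHss] /=; first by move=> _ [|] // [|].
move=> [IHs /IHss {}IHss] qs qs' /size_take_drop[szq1 szq2]
  /size_take_drop[szq1' szq2'] [eq1 eq2].
rewrite -(cat_take_drop (nleaves s) qs) -(cat_take_drop (nleaves s) qs').
by rewrite (IHs _ _ szq1 szq1' eq1) (IHss _ _ szq2 szq2' eq2).
Qed.

Lemma mem_prefixes_graft s qs rs : size qs = nleaves s -> size rs = nleaves s ->
  (graft s qs \in prefixes (graft s rs)) = all2 (fun q r => q \in prefixes r) qs rs.
Proof.
elim/tree_ind_all: s qs rs => [|a ss IH] qs rs.
  by case: qs rs => [|q [|? ?]] // [|r [|? ?]] //= _ _; rewrite andbT.
rewrite nleavesE !graftE mem_prefixes_Node eqxx /=.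
elim: ss IH qs rs => [|s ss IHss] /=; first by move=> _ [|] // [|].
move=> [IHs /IHss {}IHss] qs rs /size_take_drop[szq1 szq2] /size_take_drop[szr1 szr2].
rewrite IHs // IHss // -all2_cat ?szq1 ?szr1 //.
by rewrite !cat_take_drop.
Qed.

Variable ar : T -> nat.

Lemma graftl_prefixesP us ts :
  allProp (fun t => wf ar t -> forall u, wf ar u /\ prefix_le ar u t <-> u \in prefixes t) ts ->
  all (wf ar) ts ->
  (all (wf ar) us /\ exists rs,
     [/\ size rs = sumn (map (@nleaves T) us), all (wf ar) rs & ts = graftl us rs])
  <-> all2 (fun u t => u \in prefixes t) us ts.
Proof.
elim: us ts => [|u us IHus] [|t ts] //=.
- by split=> // _; split=> //; exists [::].
- by split=> // -[_ [rs [_ _]]].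
- by split=> // -[_ [rs [_ _]]].
move=> [IHt IHts] /andP[wft wfts]; split.
  move=> [/andP[wfu wfus] [rs [/size_take_drop[sz1 sz2] wfrs [et ets]]]].
  rewrite -(cat_take_drop (nleaves u) rs) all_cat in wfrs.
  case/andP: wfrs => wfrs1 wfrs2.
  apply/andP; split; first by apply/(IHt wft); split=> //; exists (take (nleaves u) rs).
  by apply/(IHus _ IHts wfts); split=> //; exists (drop (nleaves u) rs).
case/andP=> /(IHt wft)[wfu [rs1 [sz1 wfrs1 ->]]] /(IHus _ IHts wfts)[wfus [rs2 [sz2 wfrs2 ->]]].
split; first by rewrite wfu.
exists (rs1 ++ rs2); rewrite size_cat all_cat wfrs1 wfrs2 sz1 sz2.
by rewrite -sz1 take_size_cat // drop_size_cat.
Qed.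

Lemma prefixesP t : wf ar t -> forall u, wf ar u /\ prefix_le ar u t <-> u \in prefixes t.
Proof.
elim/tree_ind_all: t => [|a ts IH] wft [|b us].
- by split=> // _; split=> //; exists [:: Leaf].
- by split=> [[_ [rs [_ _]]] | ]; rewrite ?graftE ?inE.
- by split=> // _; split=> //; exists [:: Node a ts]; rewrite all_seq1.
move: (wft); rewrite wfE => /andP[/eqP szts wfts].
have forestP := graftl_prefixesP us IH wfts.
rewrite mem_prefixes_Node wfE; split.
  move=> [/andP[_ wfus] [rs [szrs wfrs]]]; rewrite graftE => -[<- ets].
  by rewrite eqxx; apply/forestP; split=> //; exists rs; rewrite -(nleavesE b).
case/andP=> /eqP-> hus; have [wfus [rs [szrs wfrs ets]]] := forestP.2 hus.
split; first by rewrite wfus (size_all2 hus) szts eqxx.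
by exists rs; rewrite nleavesE graftE ets.
Qed.

End Prefixes.

Lemma card_is_uniq (T : eqType) (A : tree T -> Prop) (l : seq (tree T)) :
  uniq l -> (forall u, A u <-> u \in l) -> card_is A (size l).
Proof.
move=> ul Al; exists (fun i => nth Leaf l i); split.
  by move=> i j /eqP; rewrite nth_uniq // => /eqP /val_inj.
move=> u; split=> [/Al | [i <-]]; last exact/Al/mem_nth.
by case/(nthP Leaf)=> i ltil <-; exists (Ordinal ltil).
Qed.

Section Interval.
Variable T : eqType.
Implicit Types (s t u : tree T) (qs rs : seq (tree T)).

Definition interval_enum s rs : seq (tree T) := map (graft s) (prodseq (map (@prefixes T) rs)).

Lemma size_interval_enum s rs : size (interval_enum s rs) = ld (sh (diamond rs)).
Proof.
rewrite size_map size_prodseq big_map /diamond ld_sh_Node big_map [RHS]big_mkcond.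
by apply: eq_bigr => r _; rewrite size_prefixes is_leaf_tmap sh_tmap; case: ifP.
Qed.

Lemma uniq_interval_enum s rs : size rs = nleaves s -> uniq (interval_enum s rs).
Proof.
move=> szrs; rewrite map_inj_in_uniq.
  by apply: uniq_prodseq; rewrite all_map; apply/allP => r _; apply: uniq_prefixes.
move=> qs qs'; rewrite !mem_prodseq !all2_mapr => /size_all2 szqs /size_all2 szqs'.
by apply: graft_inj; rewrite ?szqs ?szqs'.
Qed.

Variable ar : T -> nat.

Lemma wf_all2_prefixes qs rs :
  all (wf ar) rs -> all2 (fun q r => q \in prefixes r) qs rs -> all (wf ar) qs.
Proof.
elim: qs rs => [|q qs IH] [|r rs] //= /andP[wfr wfrs] /andP[qr qsrs].
by rewrite (IH _ wfrs qsrs) andbT; case: (prefixesP wfr q) => _ /(_ qr) [].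
Qed.

Lemma intervalP s t rs u : wf ar t -> is_diff ar s t rs ->
  interval ar s t u <-> u \in interval_enum s rs.
Proof.
move=> wft [szrs wfrs et]; subst t; split.
  move=> [wfu [[qs [szqs _ equ]] u_le]]; subst u.
  apply/mapP; exists qs => //; rewrite mem_prodseq all2_mapr.
  by rewrite -(mem_prefixes_graft szqs szrs); apply/(prefixesP wft).
case/mapP=> qs; rewrite mem_prodseq all2_mapr => qsrs ->.
have szqs : size qs = nleaves s by rewrite (size_all2 qsrs).
have [wfu u_le] := (prefixesP wft _).2 (etrans (mem_prefixes_graft szqs szrs) qsrs).
by split=> //; split=> //; exists qs; rewrite (wf_all2_prefixes wfrs qsrs).
Qed.

End Interval.

Theorem proposition3p12 (G : finType) (ar : G -> nat)
  (ar_pos : forall a : G, 0 < ar a)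
  (s t : tree G) (rs : seq (tree G)) :
  wf ar s -> wf ar t -> is_diff ar s t rs ->
  card_is (interval ar s t) (ld (sh (diamond rs))).
Proof.
move=> _ wft rs_diff; have [szrs _ _] := rs_diff.
rewrite -(size_interval_enum s); apply: card_is_uniq; first exact: uniq_interval_enum.
by move=> u; apply: intervalP.
Qed.
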